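(* Let $\Gamma$ be a (finite or infinite) bipartite graph with $|V(\Gamma)|\geq 4$. The following are equivalent: (1) $\Gamma$ is a discrete half graph; (2) $P_5\not\leq\Gamma$ and $\Gamma$ is critical.
   Context: A bipartite graph $\Gamma$ with bipartition $\{X,Y\}$ is a half graph if there exist a linear order $L$ on $X$ and a bijection $\varphi:X\to Y$ such that $E(\Gamma)=\{\{x,\varphi(x')\}: x\leq x' \bmod L\}$; such $L$ is unique. A linear order $L$ is discrete if every element that is not the smallest has a predecessor and every element that is not the largest has a successor. A half graph is discrete if the linear order $L$ above is discrete. $P_5$ is the path on 5 vertices; $G\leq H$ means $G$ is isomorphic to an induced subgraph of $H$. A module of a graph is a set $M$ of vertices such that each vertex outside $M$ is adjacent to all or none of $M$; $\emptyset$, $V(\Gamma)$ and singletons are trivial; $\Gamma$ is prime if $|V(\Gamma)|\geq 3$ and all its modules are trivial; a prime graph $\Gamma$ is critical if $\Gamma-v$ is not prime for every vertex $v$. *)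

From Stdlib Require Import Arith.
Set Implicit Arguments.

Definition simple_graph (V : Type) (adj : V -> V -> Prop) : Prop :=
  (forall x y, adj x y -> adj y x) /\ (forall x, ~ adj x x).

(* {X, Y} with Y = complement of X is a bipartition: every edge joins X and Y *)
Definition bipartition (V : Type) (adj : V -> V -> Prop) (X : V -> Prop) : Prop :=
  forall x y, adj x y -> (X x <-> ~ X y).

Definition at_least (n : nat) (V : Type) : Prop :=
  exists f : nat -> V, forall i j, i < n -> j < n -> f i = f j -> i = j.

Definition linear_order (T : Type) (le : T -> T -> Prop) : Prop :=
  (forall x, le x x) /\
  (forall x y, le x y -> le y x -> x = y) /\
  (forall x y z, le x y -> le y z -> le x z) /\
  (forall x y, le x y \/ le y x).

Definition strict (T : Type) (le : T -> T -> Prop) (x y : T) : Prop :=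
  le x y /\ x <> y.

Definition discrete_order (T : Type) (le : T -> T -> Prop) : Prop :=
  (forall x, (exists y, strict le y x) ->
     exists p, strict le p x /\ forall z, ~ (strict le p z /\ strict le z x)) /\
  (forall x, (exists y, strict le x y) ->
     exists s, strict le x s /\ forall z, ~ (strict le x z /\ strict le z s)).

Definition bijective_fun (A B : Type) (f : A -> B) : Prop :=
  (forall a1 a2, f a1 = f a2 -> a1 = a2) /\ (forall b, exists a, f a = b).

(* Gamma with bipartition {X, Y} (Y = complement of X) is a half graph with
   linear order L on X: there is a bijection phi : X -> Y with
   E = { {x, phi x'} : x <= x' mod L }.  Since every edge joins X and Y
   (bipartition), this amounts to: for x in X and x' in X,
   adj x (phi x') <-> x <= x', with phi bijective. *)
Definition half_graph_with (V : Type) (adj : V -> V -> Prop) (X : V -> Prop)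
    (L : {x : V | X x} -> {x : V | X x} -> Prop) : Prop :=
  linear_order L /\
  exists phi : {x : V | X x} -> {y : V | ~ X y},
    bijective_fun phi /\
    forall x x' : {x : V | X x}, adj (proj1_sig x) (proj1_sig (phi x')) <-> L x x'.

Definition discrete_half_graph (V : Type) (adj : V -> V -> Prop) (X : V -> Prop) : Prop :=
  exists L, half_graph_with adj X L /\ discrete_order L.

Definition has_induced_P5 (V : Type) (adj : V -> V -> Prop) : Prop :=
  exists f : nat -> V,
    (forall i j, i < 5 -> j < 5 -> f i = f j -> i = j) /\
    (forall i j, i < 5 -> j < 5 -> (adj (f i) (f j) <-> (S i = j \/ S j = i))).

Definition is_module (V : Type) (adj : V -> V -> Prop) (M : V -> Prop) : Prop :=
  forall v, ~ M v ->
    (forall m, M m -> adj v m) \/ (forall m, M m -> ~ adj v m).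

Definition trivial_module (V : Type) (M : V -> Prop) : Prop :=
  (forall v, ~ M v) \/ (forall v, M v) \/ (exists a, forall v, M v <-> v = a).

Definition prime_graph (V : Type) (adj : V -> V -> Prop) : Prop :=
  at_least 3 V /\ forall M : V -> Prop, is_module adj M -> trivial_module M.

Definition delete_vertex (V : Type) (adj : V -> V -> Prop) (v : V) :
    {u : V | u <> v} -> {u : V | u <> v} -> Prop :=
  fun a b => adj (proj1_sig a) (proj1_sig b).

Definition critical_graph (V : Type) (adj : V -> V -> Prop) : Prop :=
  prime_graph adj /\ forall v : V, ~ prime_graph (@delete_vertex V adj v).

From Stdlib Require Import Lia List Classical ProofIrrelevance ClassicalEpsilon.
Import ListNotations.

(* A half graph is a bipartite graph whose neighbourhoods are nested on each side (a chain
   graph), both sides being indexed by one order.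
   (1) => (2): nested neighbourhoods exclude an induced 2K2, hence P5; a module with two
   vertices absorbs a matched pair x, phi x and then everything; deleting x makes
   phi (pred x) and phi x twins, or leaves phi x isolated when x is minimal, and dually.
   (2) => (1): in a prime P5-free bipartite graph, the closed neighbourhood of the vertices
   sharing a neighbour with a is a module, which rules out 2K2, so the neighbourhoods of X
   are nested and give the order.  Deleting v leaves a nontrivial module that v splits; it
   yields a vertex on the other side adjacent exactly to {u | N(v) <= N(u)} (this is
   phi v) and, if v is not minimal, a vertex adjacent to the same set minus v, which is
   phi of the predecessor.  Primality forbids twins, so phi is a bijection; the same
   argument on the side Y gives successors. *)

Lemma sig_inj {A : Type} {Q : A -> Prop} {a b : {x : A | Q x}} :
  proj1_sig a = proj1_sig b -> a = b.
Proof. apply eq_sig_hprop; intros; apply proof_irrelevance. Qed.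

Lemma at_least_avoid {n : nat} {V : Type} :
  at_least n V -> forall l : list V, length l < n -> exists d, ~ In d l.
Proof.
  intros [f hf] l hl. apply NNPP; intro hcov.
  assert (hincl : incl (map f (seq 0 n)) l).
  { intros d _. apply NNPP; intro hd. apply hcov. now exists d. }
  assert (hnd : NoDup (map f (seq 0 n))).
  { apply NoDup_map_NoDup_ForallPairs; [|apply seq_NoDup].
    intros i j hi hj. apply in_seq in hi, hj. apply hf; lia. }
  pose proof (NoDup_incl_length hnd hincl) as hlen.
  rewrite length_map, length_seq in hlen. lia.
Qed.

Lemma at_least_delete {V : Type} (v : V) :
  at_least 4 V -> at_least 3 {u : V | u <> v}.
Proof.
  intros h4.
  destruct (at_least_avoid h4 [v] ltac:(simpl; lia)) as [d0 h0].
  destruct (at_least_avoid h4 [v; d0] ltac:(simpl; lia)) as [d1 h1].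
  destruct (at_least_avoid h4 [v; d0; d1] ltac:(simpl; lia)) as [d2 h2].
  simpl in h0, h1, h2.
  assert (n0 : d0 <> v) by (intro; subst; tauto).
  assert (n1 : d1 <> v) by (intro; subst; tauto).
  assert (n2 : d2 <> v) by (intro; subst; tauto).
  exists (fun k => match k with
                   | 0 => exist _ d0 n0 | 1 => exist _ d1 n1 | _ => exist _ d2 n2 end).
  intros i j hi hj E. apply (f_equal (@proj1_sig _ _)) in E.
  destruct i as [|[|[|i]]]; try lia; destruct j as [|[|[|j]]]; try lia;
    simpl in E; first [reflexivity | exfalso; intuition congruence].
Qed.

Definition nsub {V : Type} (adj : V -> V -> Prop) (u v : V) : Prop :=
  forall z, adj z u -> adj z v.

Definition nested {V : Type} (adj : V -> V -> Prop) (P : V -> Prop) : Prop :=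
  forall a c, P a -> P c -> nsub adj a c \/ nsub adj c a.

Section Modules.

Context {V : Type} {adj : V -> V -> Prop}.

Lemma module_mem_of_split {M : V -> Prop} {m1 m2 w : V} :
  is_module adj M -> M m1 -> M m2 -> adj w m1 -> ~ adj w m2 -> M w.
Proof.
  intros hM h1 h2 e1 n2. apply NNPP; intro hw.
  destruct (hM w hw) as [h|h]; [exact (n2 (h m2 h2)) | exact (h m1 h1 e1)].
Qed.

Lemma prime_module_full (M : V -> Prop) a b :
  prime_graph adj -> is_module adj M -> M a -> M b -> a <> b -> forall c, M c.
Proof.
  intros [_ hp] hM ha hb hab c.
  destruct (hp M hM) as [h|[h|[s h]]].
  - now destruct (h a ha).
  - apply h.
  - now destruct hab; rewrite (proj1 (h a) ha), (proj1 (h b) hb).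
Qed.

Lemma trivial_module_of_full (M : V -> Prop) :
  (forall a b, M a -> M b -> a <> b -> forall c, M c) -> trivial_module M.
Proof.
  intros hfull.
  destruct (classic (exists a, M a)) as [[a ha]|hno].
  - right. destruct (classic (exists b, M b /\ b <> a)) as [[b [hb hba]]|hone].
    + left. exact (hfull b a hb ha hba).
    + right. exists a. intro v. split; [|now intros ->].
      intro hv. apply NNPP; intro hva. apply hone. now exists v.
  - left. intros v hv. apply hno. now exists v.
Qed.

Lemma prime_no_isolated :
  prime_graph adj -> forall w, exists z, adj w z.
Proof.
  intros hp w. apply NNPP; intro hiso.
  destruct (at_least_avoid (proj1 hp) [w] ltac:(simpl; lia)) as [d hd].
  destruct (at_least_avoid (proj1 hp) [w; d] ltac:(simpl; lia)) as [e he].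
  simpl in hd, he.
  assert (hM : is_module adj (fun u => u <> w)).
  { intros u hu. apply NNPP in hu. subst u. right. intros m _ e'. apply hiso. now exists m. }
  refine (prime_module_full _ d e hp hM _ _ _ w eq_refl); intro; subst; tauto.
Qed.

Lemma prime_twins_eq a b :
  prime_graph adj -> nsub adj a b -> nsub adj b a -> a = b.
Proof.
  intros hp hab hba. apply NNPP; intro hne.
  destruct (at_least_avoid (proj1 hp) [a; b] ltac:(simpl; lia)) as [d hd]. simpl in hd.
  assert (hM : is_module adj (fun u => u = a \/ u = b)).
  { intros u _. destruct (classic (adj u a)) as [h|h].
    - left. intros m [-> | ->]; auto.
    - right. intros m [-> | ->]; auto. }
  destruct (prime_module_full _ a b hp hM (or_introl eq_refl) (or_intror eq_refl) hne d)
    as [-> | ->]; tauto.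
Qed.

End Modules.

Definition module_off {V : Type} (adj : V -> V -> Prop) (v : V) (M : V -> Prop) : Prop :=
  forall u, u <> v -> ~ M u -> (forall m, M m -> adj u m) \/ (forall m, M m -> ~ adj u m).

Section Deletion.

Context {V : Type} {adj : V -> V -> Prop}.

Lemma delete_twins_not_prime {v : V} (a b : V) :
  a <> v -> b <> v -> a <> b -> (forall u, u <> v -> (adj u a <-> adj u b)) ->
  ~ prime_graph (@delete_vertex V adj v).
Proof.
  intros hav hbv hab htw hp.
  assert (E : exist _ a hav = exist _ b hbv :> {u : V | u <> v}).
  { apply (prime_twins_eq _ _ hp); intros [u hu]; unfold delete_vertex; simpl; apply htw, hu. }
  apply hab. exact (f_equal (@proj1_sig _ _) E).
Qed.

Lemma delete_isolated_not_prime {v : V} (w : V) :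
  w <> v -> (forall u, adj w u -> u = v) -> ~ prime_graph (@delete_vertex V adj v).
Proof.
  intros hwv hiso hp.
  destruct (prime_no_isolated hp (exist _ w hwv)) as [[u hu] e].
  exact (hu (hiso u e)).
Qed.

Lemma delete_module_lift v :
  at_least 4 V -> ~ prime_graph (@delete_vertex V adj v) ->
  exists M : V -> Prop, ~ M v /\ module_off adj v M /\
    (exists m1 m2, M m1 /\ M m2 /\ m1 <> m2) /\ (exists o, o <> v /\ ~ M o).
Proof.
  intros h4 hnp.
  assert (hM : exists M, is_module (@delete_vertex V adj v) M /\ ~ trivial_module M).
  { apply NNPP; intro H. apply hnp. split; [exact (at_least_delete v h4)|].
    intros M hm. apply NNPP; intro ht. apply H. eauto. }
  destruct hM as [M [hm ht]].
  assert (hnfull : ~ forall a b, M a -> M b -> a <> b -> forall c, M c)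
    by (intro H; exact (ht (trivial_module_of_full _ H))).
  apply not_all_ex_not in hnfull as [[a ha] hnfull].
  apply not_all_ex_not in hnfull as [[b hb] hnfull].
  apply imply_to_and in hnfull as [Ma hnfull]. apply imply_to_and in hnfull as [Mb hnfull].
  apply imply_to_and in hnfull as [hab hnfull]. apply not_all_ex_not in hnfull as [[c hc] Mc].
  exists (fun u => exists h : u <> v, M (exist _ u h)).
  split; [|split; [|split]].
  - intros [h _]. now apply h.
  - intros u hu hMu.
    assert (nM : ~ M (exist _ u hu)) by (intro; apply hMu; eauto).
    destruct (hm _ nM) as [H|H]; [left|right]; intros m [hm' Mm]; exact (H _ Mm).
  - exists a, b. split; [eauto|split; [eauto|]].
    intro E. subst b. apply hab. f_equal. apply proof_irrelevance.
  - exists c. split; [exact hc|]. intros [h Mc']. apply Mc.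
    now rewrite (proof_irrelevance _ hc h).
Qed.

(* Otherwise [M] would be a nontrivial module of the whole graph. *)
Lemma prime_splits_module_off v (M : V -> Prop) m1 m2 o :
  prime_graph adj -> ~ M v -> module_off adj v M -> M m1 -> M m2 -> m1 <> m2 -> ~ M o ->
  (exists m, M m /\ adj v m) /\ (exists m, M m /\ ~ adj v m).
Proof.
  intros hp hv hM h1 h2 h12 ho.
  assert (hfull : (forall m, M m -> adj v m) \/ (forall m, M m -> ~ adj v m) -> False).
  { intro hvM. apply ho, (prime_module_full M m1 m2 hp); auto.
    intros u hu. destruct (classic (u = v)) as [->|huv]; auto. }
  split; apply NNPP; intro H; apply hfull.
  - right. intros m hm h. apply H. eauto.
  - left. intros m hm. apply NNPP; intro h. apply H. eauto.
Qed.

End Deletion.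

Lemma induced_P5_of {V : Type} {adj : V -> V -> Prop} (v0 v1 v2 v3 v4 : V) :
  simple_graph adj ->
  adj v0 v1 -> adj v1 v2 -> adj v2 v3 -> adj v3 v4 ->
  ~ adj v0 v2 -> ~ adj v0 v3 -> ~ adj v0 v4 -> ~ adj v1 v3 -> ~ adj v1 v4 -> ~ adj v2 v4 ->
  has_induced_P5 adj.
Proof.
  intros [hsym hirr] e01 e12 e23 e34 n02 n03 n04 n13 n14 n24.
  assert (d01 : v0 <> v1) by (intros ->; exact (hirr _ e01)).
  assert (d12 : v1 <> v2) by (intros ->; exact (hirr _ e12)).
  assert (d23 : v2 <> v3) by (intros ->; exact (hirr _ e23)).
  assert (d34 : v3 <> v4) by (intros ->; exact (hirr _ e34)).
  assert (d02 : v0 <> v2) by (intros ->; contradiction).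
  assert (d03 : v0 <> v3) by (intros ->; contradiction).
  assert (d04 : v0 <> v4) by (intros ->; exact (n03 (hsym _ _ e34))).
  assert (d13 : v1 <> v3) by (intros ->; contradiction).
  assert (d14 : v1 <> v4) by (intros ->; contradiction).
  assert (d24 : v2 <> v4) by (intros ->; contradiction).
  exists (fun i => match i with 0 => v0 | 1 => v1 | 2 => v2 | 3 => v3 | _ => v4 end).
  split; intros i j hi hj;
    destruct i as [|[|[|[|[|i]]]]]; try lia; destruct j as [|[|[|[|[|j]]]]]; try lia.
  all: try (intro E; first [reflexivity | exfalso; congruence]).
  all: split; [intro E | intros [E|E]]; try lia; auto;
    exfalso; first [ exact (hirr _ E) | eauto ].
Qed.

Section Bipartite.

Context {V : Type} {adj : V -> V -> Prop} {P : V -> Prop}.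
Hypothesis hsym : forall x y, adj x y -> adj y x.
Hypothesis hbip : bipartition adj P.

Lemma bipartition_compl : bipartition adj (fun v => ~ P v).
Proof. intros x y h. pose proof (hbip x y h). tauto. Qed.

Lemma bip_nadj_in a b : P a -> P b -> ~ adj a b.
Proof. intros ha hb h. exact (proj1 (hbip a b h) ha hb). Qed.

Lemma bip_nadj_out a b : ~ P a -> ~ P b -> ~ adj a b.
Proof. intros ha hb h. exact (ha (proj2 (hbip a b h) hb)). Qed.

Lemma bip_adj_out a b : adj a b -> P a -> ~ P b.
Proof. intros h. exact (proj1 (hbip a b h)). Qed.

Lemma bip_adj_in a b : adj a b -> ~ P a -> P b.
Proof. intros h ha. apply NNPP; intro hb. exact (ha (proj2 (hbip a b h) hb)). Qed.

Lemma nested_cross a b c d :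
  nested adj P -> P a -> P c -> adj a b -> adj c d -> adj c b \/ adj a d.
Proof.
  intros hn ha hc hab hcd.
  destruct (hn a c ha hc) as [h|h]; [left | right]; apply hsym, h, hsym; assumption.
Qed.

Lemma nested_no_2K2 a b c d :
  nested adj P -> adj a b -> adj c d -> adj a c \/ adj a d \/ adj b c \/ adj b d.
Proof.
  intros hn hab hcd.
  pose proof (hsym _ _ hab) as hba. pose proof (hsym _ _ hcd) as hdc.
  destruct (classic (P a)) as [ha|ha]; destruct (classic (P c)) as [hc|hc].
  - destruct (nested_cross _ _ _ _ hn ha hc hab hcd) as [h|h]; auto.
  - destruct (nested_cross _ _ _ _ hn ha (bip_adj_in _ _ hcd hc) hab hdc) as [h|h]; auto.
  - destruct (nested_cross _ _ _ _ hn (bip_adj_in _ _ hab ha) hc hba hcd) as [h|h]; auto.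
  - destruct (nested_cross _ _ _ _ hn (bip_adj_in _ _ hab ha) (bip_adj_in _ _ hcd hc) hba hdc)
      as [h|h]; auto.
Qed.

Lemma nested_no_P5 : nested adj P -> ~ has_induced_P5 adj.
Proof.
  intros hn [f [_ hf]].
  assert (e01 : adj (f 0) (f 1)) by (apply hf; lia).
  assert (e34 : adj (f 3) (f 4)) by (apply hf; lia).
  destruct (nested_no_2K2 _ _ _ _ hn e01 e34) as [h|[h|[h|h]]];
    revert h; rewrite hf; lia.
Qed.

End Bipartite.

Definition common_nbr_closure {V : Type} (adj : V -> V -> Prop) (P : V -> Prop) (a u : V) :
    Prop :=
  exists a', P a' /\ (u = a' \/ adj u a') /\ exists e, adj a' e /\ adj a e.

Section P5Free.

Context {V : Type} {adj : V -> V -> Prop} {P : V -> Prop}.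
Hypothesis hs : simple_graph adj.
Hypothesis hbip : bipartition adj P.
Hypothesis hnoP5 : ~ has_induced_P5 adj.

Let hsym := proj1 hs.

(* An edge leaving the closure would be the end of an induced P5. *)
Lemma common_nbr_closure_module a : is_module adj (common_nbr_closure adj P a).
Proof.
  intros u hu. right. intros m [a' [ha' [Em [e [e1 e2]]]]] hum.
  destruct Em as [->|hma'].
  { apply hu. exists a'. split; [exact ha'|]. split; [now right|]. now exists e. }
  assert (hm : ~ P m) by exact (bip_adj_out hbip _ _ (hsym _ _ hma') ha').
  assert (hu' : P u) by exact (bip_adj_in hbip _ _ (hsym _ _ hum) hm).
  assert (he : ~ P e) by exact (bip_adj_out hbip _ _ e1 ha').
  assert (ha : P a) by exact (bip_adj_in hbip _ _ (hsym _ _ e2) he).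
  destruct (classic (adj m a)) as [hma|hma].
  { apply hu. exists u. split; [exact hu'|]. split; [now left|].
    exists m. split; [exact hum | apply hsym, hma]. }
  destruct (classic (adj u e)) as [hue|hue].
  { apply hu. exists u. split; [exact hu'|]. split; [now left|]. now exists e. }
  apply hnoP5, (induced_P5_of u m a' e a hs hum hma' e1 (hsym _ _ e2));
    first [ assumption | apply (bip_nadj_in hbip); assumption
          | apply (bip_nadj_out hbip); assumption ].
Qed.

Lemma P5_free_prime_nested : prime_graph adj -> nested adj P.
Proof.
  intros hp a c ha hc. apply NNPP; intro H. apply not_or_and in H as [H1 H2].
  apply not_all_ex_not in H1 as [z1 H1]. apply imply_to_and in H1 as [z1a z1c].
  apply not_all_ex_not in H2 as [z2 H2]. apply imply_to_and in H2 as [z2c z2a].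
  assert (hz1 : ~ P z1) by exact (bip_adj_out hbip _ _ (hsym _ _ z1a) ha).
  assert (hz2 : ~ P z2) by exact (bip_adj_out hbip _ _ (hsym _ _ z2c) hc).
  assert (Ma : common_nbr_closure adj P a a).
  { exists a. split; [exact ha|]. split; [now left|]. exists z1. split; apply hsym, z1a. }
  assert (Mz1 : common_nbr_closure adj P a z1).
  { exists a. split; [exact ha|]. split; [now right|]. exists z1. split; apply hsym, z1a. }
  assert (haz1 : a <> z1) by (intros ->; exact (hz1 ha)).
  destruct (prime_module_full _ _ _ hp (common_nbr_closure_module a) Ma Mz1 haz1 c)
    as [a' [ha' [[E|hca'] [e [e1 e2]]]]].
  - subst a'.
    assert (he : ~ P e) by exact (bip_adj_out hbip _ _ e1 hc).
    apply hnoP5, (induced_P5_of z1 a e c z2 hs z1a e2 (hsym _ _ e1) (hsym _ _ z2c));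
      first [ assumption | apply (bip_nadj_in hbip); assumption
            | apply (bip_nadj_out hbip); assumption | intro h; apply z2a, hsym, h ].
  - exact (bip_nadj_in hbip _ _ hc ha' hca').
Qed.

End P5Free.

Section HalfGraph.

Context {V : Type} {adj : V -> V -> Prop} {X : V -> Prop}.
Variable L : {x : V | X x} -> {x : V | X x} -> Prop.
Variable phi : {x : V | X x} -> {y : V | ~ X y}.
Hypothesis hsym : forall x y, adj x y -> adj y x.
Hypothesis hbip : bipartition adj X.
Hypothesis hL : linear_order L.
Hypothesis hphi : bijective_fun phi.
Hypothesis hadj : forall x x', adj (proj1_sig x) (proj1_sig (phi x')) <-> L x x'.

Local Notation xv i := (@proj1_sig V (fun x => X x) i).
Local Notation yv i := (proj1_sig (phi i)).

Let Lrefl := proj1 hL.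
Let Lanti := proj1 (proj2 hL).
Let Ltrans := proj1 (proj2 (proj2 hL)).
Let Ltotal := proj2 (proj2 (proj2 hL)).

Lemma half_cover v : (exists i, v = xv i) \/ (exists i, v = yv i).
Proof.
  destruct (classic (X v)) as [h|h].
  - left. now exists (exist _ v h).
  - right. destruct (proj2 hphi (exist _ v h)) as [i hi]. exists i. now rewrite hi.
Qed.

Lemma half_yx i j : adj (yv j) (xv i) <-> L i j.
Proof. rewrite <- hadj. split; apply hsym. Qed.

Lemma half_nadj_xx i j : ~ adj (xv i) (xv j).
Proof. apply (bip_nadj_in hbip); apply proj2_sig. Qed.

Lemma half_nadj_yy i j : ~ adj (yv i) (yv j).
Proof. apply (bip_nadj_out hbip); apply proj2_sig. Qed.

Lemma half_x_neq_y i j : xv i <> yv j.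
Proof. intro E. apply (proj2_sig (phi j)). rewrite <- E. apply proj2_sig. Qed.

Lemma half_nested : nested adj X.
Proof.
  intros a c ha hc.
  assert (hin : forall i k, L i k -> nsub adj (xv k) (xv i)).
  { intros i k l z hz.
    destruct (half_cover z) as [[j ->]|[j ->]].
    - now destruct (half_nadj_xx _ _ hz).
    - apply half_yx. apply half_yx in hz. exact (Ltrans _ _ _ l hz). }
  destruct (Ltotal (exist _ a ha) (exist _ c hc)) as [l|l]; [right|left]; exact (hin _ _ l).
Qed.

Section HalfModules.

Variable M : V -> Prop.
Hypothesis hM : is_module adj M.

Lemma half_module_pair i : M (xv i) -> M (yv i) -> forall v, M v.
Proof.
  intros hx hy v.
  assert (hj : forall j, M (xv j) /\ M (yv j)).
  { intro j. destruct (Ltotal i j) as [l|l].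
    - assert (hyj : M (yv j))
        by exact (module_mem_of_split hM hx hy (proj2 (half_yx _ _) l) (half_nadj_yy _ _)).
      split; [|exact hyj].
      exact (module_mem_of_split hM hyj hx (proj2 (hadj _ _) (Lrefl j)) (half_nadj_xx _ _)).
    - assert (hxj : M (xv j))
        by exact (module_mem_of_split hM hy hx (proj2 (hadj _ _) l) (half_nadj_xx _ _)).
      split; [exact hxj|].
      exact (module_mem_of_split hM hxj hy (proj2 (half_yx _ _) (Lrefl j)) (half_nadj_yy _ _)). }
  destruct (half_cover v) as [[j ->]|[j ->]]; apply hj.
Qed.

Lemma half_module_xx i k : M (xv i) -> M (xv k) -> i <> k -> forall v, M v.
Proof.
  intros hi hk hik.
  assert (hlt : forall i k, M (xv i) -> M (xv k) -> i <> k -> L i k -> M (yv i)).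
  { intros i' k' hi' hk' hne l.
    apply (module_mem_of_split hM hi' hk' (proj2 (half_yx _ _) (Lrefl i'))).
    intro h. apply half_yx in h. exact (hne (Lanti _ _ l h)). }
  destruct (Ltotal i k) as [l|l].
  - exact (half_module_pair i hi (hlt i k hi hk hik l)).
  - exact (half_module_pair k hk (hlt k i hk hi (not_eq_sym hik) l)).
Qed.

Lemma half_module_yy i k : M (yv i) -> M (yv k) -> i <> k -> forall v, M v.
Proof.
  intros hi hk hik.
  assert (hlt : forall i k, M (yv i) -> M (yv k) -> i <> k -> L i k -> M (xv k)).
  { intros i' k' hi' hk' hne l.
    apply (module_mem_of_split hM hk' hi' (proj2 (hadj _ _) (Lrefl k'))).
    intro h. apply hadj in h. exact (hne (Lanti _ _ l h)). }
  destruct (Ltotal i k) as [l|l].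
  - exact (half_module_pair k (hlt i k hi hk hik l) hk).
  - exact (half_module_pair i (hlt k i hk hi (not_eq_sym hik) l) hi).
Qed.

Lemma half_module_xy i k : M (xv i) -> M (yv k) -> forall v, M v.
Proof.
  intros hi hk. destruct (Ltotal i k) as [l|l].
  - apply (half_module_pair k); [|exact hk].
    exact (module_mem_of_split hM hk hi (proj2 (hadj _ _) (Lrefl k)) (half_nadj_xx _ _)).
  - apply (half_module_pair i hi).
    exact (module_mem_of_split hM hi hk (proj2 (half_yx _ _) (Lrefl i)) (half_nadj_yy _ _)).
Qed.

Lemma half_module_full a b : M a -> M b -> a <> b -> forall v, M v.
Proof.
  intros ha hb hab.
  destruct (half_cover a) as [[i ->]|[i ->]]; destruct (half_cover b) as [[k ->]|[k ->]].
  - apply (half_module_xx i k ha hb). congruence.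
  - exact (half_module_xy i k ha hb).
  - exact (half_module_xy k i hb ha).
  - apply (half_module_yy i k ha hb). congruence.
Qed.

End HalfModules.

Lemma half_graph_prime : at_least 4 V -> prime_graph adj.
Proof.
  intros [f hf]. split.
  - exists f. intros i j hi hj. apply hf; lia.
  - intros M hM. apply trivial_module_of_full, (half_module_full M hM).
Qed.

Hypothesis hdisc : discrete_order L.

Lemma half_delete_x_not_prime i : ~ prime_graph (@delete_vertex V adj (xv i)).
Proof.
  destruct (classic (exists j, strict L j i)) as [hex|hmin].
  - destruct (proj1 hdisc i hex) as [p [[lpi npi] hbet]].
    apply (delete_twins_not_prime (yv p) (yv i)).
    + apply not_eq_sym, half_x_neq_y.
    + apply not_eq_sym, half_x_neq_y.
    + intro E. apply npi, (proj1 hphi), sig_inj, E.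
    + intros u hu. destruct (half_cover u) as [[j ->]|[j ->]].
      * rewrite !hadj. split; [intro l; exact (Ltrans _ _ _ l lpi)|intro l].
        assert (hji : j <> i) by (intros ->; exact (hu eq_refl)).
        destruct (classic (p = j)) as [->|hpj]; [apply Lrefl|].
        destruct (Ltotal j p) as [l'|l']; [exact l'|].
        destruct (hbet j). split; split; assumption.
      * split; intro h; destruct (half_nadj_yy _ _ h).
  - apply (delete_isolated_not_prime (yv i)); [apply not_eq_sym, half_x_neq_y|].
    intros u hu. destruct (half_cover u) as [[j ->]|[j ->]].
    + apply half_yx in hu. apply NNPP; intro hji. apply hmin. exists j. split; [exact hu|].
      intros ->. exact (hji eq_refl).
    + destruct (half_nadj_yy _ _ hu).
Qed.

Lemma half_delete_y_not_prime i : ~ prime_graph (@delete_vertex V adj (yv i)).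
Proof.
  destruct (classic (exists j, strict L i j)) as [hex|hmax].
  - destruct (proj2 hdisc i hex) as [s [[lis nis] hbet]].
    apply (delete_twins_not_prime (xv i) (xv s)).
    + apply half_x_neq_y.
    + apply half_x_neq_y.
    + intro E. apply nis, sig_inj. congruence.
    + intros u hu. destruct (half_cover u) as [[j ->]|[j ->]].
      * split; intro h; destruct (half_nadj_xx _ _ h).
      * rewrite !half_yx. split; [intro l|intro l; exact (Ltrans _ _ _ lis l)].
        assert (hij : i <> j) by (intros ->; exact (hu eq_refl)).
        destruct (classic (j = s)) as [->|hjs]; [apply Lrefl|].
        destruct (Ltotal s j) as [l'|l']; [exact l'|].
        destruct (hbet j). split; split; assumption.
  - apply (delete_isolated_not_prime (xv i)); [apply half_x_neq_y|].
    intros u hu. destruct (half_cover u) as [[j ->]|[j ->]].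
    + destruct (half_nadj_xx _ _ hu).
    + apply hadj in hu. apply NNPP; intro hji. apply hmax. exists j. split; [exact hu|].
      intros ->. exact (hji eq_refl).
Qed.

Lemma half_graph_critical : at_least 4 V -> critical_graph adj.
Proof.
  intros h4. split; [exact (half_graph_prime h4)|].
  intro v. destruct (half_cover v) as [[i ->]|[i ->]].
  - apply half_delete_x_not_prime.
  - apply half_delete_y_not_prime.
Qed.

End HalfGraph.

(* In a half graph, [phi v] is the vertex [w] with this property. *)
Definition downset_vertex {V : Type} (adj : V -> V -> Prop) (P : V -> Prop) (v w : V) : Prop :=
  forall u, P u -> (adj u w <-> nsub adj v u).

Lemma downset_vertex_swap {V : Type} {adj : V -> V -> Prop} (P Q : V -> Prop) v y :
  (forall x y, adj x y -> adj y x) -> P v -> (forall u, adj u y -> P u) ->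
  downset_vertex adj P v y -> downset_vertex adj Q y v.
Proof.
  intros hsym hv hy D t _. split.
  - intros htv z hzy. apply hsym. apply (proj1 (D z (hy z hzy)) hzy), htv.
  - intro hyt. apply hsym, hyt, (proj2 (D v hv)). intros z h; exact h.
Qed.

Section Critical.

Context {V : Type} {adj : V -> V -> Prop} {P : V -> Prop}.
Hypothesis hs : simple_graph adj.
Hypothesis hbip : bipartition adj P.
Hypothesis hcrit : critical_graph adj.
Hypothesis h4 : at_least 4 V.
Hypothesis hnoP5 : ~ has_induced_P5 adj.

Let hsym := proj1 hs.
Let hprime := proj1 hcrit.
Let hnested := P5_free_prime_nested hs hbip hnoP5 hprime.

(* An edge inside [M] and an edge outside it would form an induced 2K2. *)
Lemma closed_module_off_pendant v (M : V -> Prop) m1 o :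
  ~ M v -> (forall u, u <> v -> ~ M u -> forall m, M m -> ~ adj u m) ->
  M m1 -> o <> v -> ~ M o -> exists w, w <> v /\ forall z, adj w z -> z = v.
Proof.
  intros hv hcl h1 hov ho.
  destruct (classic (exists o', o' <> v /\ adj o o')) as [[o' [ho'v hoo']]|hno].
  - exists m1. split; [intros ->; exact (hv h1)|].
    intros z hz. apply NNPP; intro hzv.
    assert (hMz : M z) by (apply NNPP; intro h; exact (hcl z hzv h m1 h1 (hsym _ _ hz))).
    assert (hMo' : ~ M o') by (intro h; exact (hcl o hov ho o' h hoo')).
    destruct (nested_no_2K2 hsym hbip m1 z o o' hnested hz hoo') as [h|[h|[h|h]]].
    + exact (hcl o hov ho m1 h1 (hsym _ _ h)).
    + exact (hcl o' ho'v hMo' m1 h1 (hsym _ _ h)).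
    + exact (hcl o hov ho z hMz (hsym _ _ h)).
    + exact (hcl o' ho'v hMo' z hMz (hsym _ _ h)).
  - exists o. split; [exact hov|]. intros z hz. apply NNPP; intro hzv. apply hno; eauto.
Qed.

(* The nontrivial module of the graph minus [v] is split by [v].  If it avoids [P], two of
   its members are neighbourhood-twins on [P] except for [v]; otherwise it is cut off from
   the rest of the graph, which forces a vertex whose only neighbour is [v]. *)
Lemma critical_delete_cases v :
  P v ->
  (exists w1 w2, ~ P w1 /\ ~ P w2 /\ ~ adj v w1 /\
     forall u, P u -> (adj u w2 <-> adj u w1 \/ u = v)) \/
  (exists w, ~ P w /\ forall u, adj u w <-> u = v).
Proof.
  intros hv.
  destruct (delete_module_lift v h4 (proj2 hcrit v))
    as [M [hMv [hM [[m1 [m2 [h1 [h2 h12]]]] [o [hov ho]]]]]].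
  destruct (prime_splits_module_off v M m1 m2 o hprime hMv hM h1 h2 h12 ho)
    as [[mp [hmp emp]] [mn [hmn nmn]]].
  assert (hPmp : ~ P mp) by exact (bip_adj_out hbip _ _ emp hv).
  destruct (classic (exists a, M a /\ P a)) as [[a [ha hPa]]|hnoP].
  - right.
    assert (hcl : forall u, u <> v -> ~ M u -> forall m, M m -> ~ adj u m).
    { intros u hu hMu. destruct (hM u hu hMu) as [h|h]; [exfalso|exact h].
      destruct (classic (P u)) as [hPu|hPu].
      - exact (bip_nadj_in hbip _ _ hPu hPa (h a ha)).
      - exact (bip_nadj_out hbip _ _ hPu hPmp (h mp hmp)). }
    destruct (closed_module_off_pendant v M m1 o hMv hcl h1 hov ho) as [w [hwv hw]].
    destruct (prime_no_isolated hprime w) as [z hz].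
    pose proof (hw z hz) as ->.
    exists w. split; [exact (bip_adj_out hbip _ _ (hsym _ _ hz) hv)|].
    intro u. split; [intro h; exact (hw u (hsym _ _ h))|intros ->; exact (hsym _ _ hz)].
  - left. exists mn, mp.
    split; [intro h; apply hnoP; eauto|]. split; [exact hPmp|]. split; [exact nmn|].
    intros u hPu. destruct (classic (u = v)) as [->|huv]; [tauto|].
    assert (hMu : ~ M u) by (intro h; apply hnoP; eauto).
    destruct (hM u huv hMu) as [h|h].
    + split; auto.
    + split; [intro e; destruct (h mp hmp e)|intros [e|e]; [destruct (h mn hmn e)|congruence]].
Qed.

Lemma downset_of_extension v w1 w2 :
  P v -> ~ adj v w1 -> (forall u, P u -> (adj u w2 <-> adj u w1 \/ u = v)) ->
  downset_vertex adj P v w2.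
Proof.
  intros hv hvw1 H u hu. split.
  - intro e. destruct (proj1 (H u hu) e) as [e1| ->]; [|intros z h; exact h].
    destruct (hnested v u hv hu) as [h|h]; [exact h|].
    destruct hvw1. apply hsym, h, hsym, e1.
  - intro h. apply hsym, h, hsym, (proj2 (H v hv)). now right.
Qed.

Lemma downset_of_pendant v w :
  (forall u, adj u w <-> u = v) -> downset_vertex adj P v w.
Proof.
  intros H u _. split.
  - intros e. rewrite (proj1 (H u) e). intros z h; exact h.
  - intro h. apply hsym, h, hsym, H. reflexivity.
Qed.

Lemma downset_vertex_exists v : P v -> exists w, ~ P w /\ downset_vertex adj P v w.
Proof.
  intro hv. destruct (critical_delete_cases v hv) as [[w1 [w2 [_ [h2 [hvw1 H]]]]]|[w [hw H]]].
  - exists w2. split; [exact h2|]. exact (downset_of_extension v w1 w2 hv hvw1 H).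
  - exists w. split; [exact hw|]. exact (downset_of_pendant v w H).
Qed.

Lemma downset_vertex_unique v w w' :
  ~ P w -> ~ P w' -> downset_vertex adj P v w -> downset_vertex adj P v w' -> w = w'.
Proof.
  intros hw hw' D D'.
  apply (prime_twins_eq _ _ hprime); intros z hz.
  - pose proof (bip_adj_in hbip _ _ (hsym _ _ hz) hw) as hPz.
    apply (D' z hPz), (D z hPz), hz.
  - pose proof (bip_adj_in hbip _ _ (hsym _ _ hz) hw') as hPz.
    apply (D z hPz), (D' z hPz), hz.
Qed.

End Critical.

Section Predecessor.

Context {V : Type} {adj : V -> V -> Prop} {P : V -> Prop}.
Hypothesis hs : simple_graph adj.
Hypothesis hbip : bipartition adj P.
Hypothesis hcrit : critical_graph adj.
Hypothesis h4 : at_least 4 V.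
Hypothesis hnoP5 : ~ has_induced_P5 adj.

Let hsym := proj1 hs.

Lemma downset_vertex_onto w : ~ P w -> exists p, P p /\ downset_vertex adj P p w.
Proof.
  intro hw.
  destruct (downset_vertex_exists hs (bipartition_compl hbip) hcrit h4 hnoP5 w hw)
    as [p [hp D]].
  apply NNPP in hp. exists p. split; [exact hp|].
  apply (downset_vertex_swap (fun v => ~ P v) P w p hsym hw); [|exact D].
  intros u hu. exact (bip_adj_out hbip _ _ (hsym _ _ hu) hp).
Qed.

Lemma critical_predecessor v :
  P v -> (exists u, P u /\ nsub adj v u /\ u <> v) ->
  exists p, P p /\ nsub adj v p /\ p <> v /\
    forall u, P u -> nsub adj v u -> nsub adj u p -> u = v \/ u = p.
Proof.
  intros hv [u0 [hu0 [hvu0 hu0v]]].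
  destruct (critical_delete_cases hs hbip hcrit h4 hnoP5 v hv)
    as [[w1 [w2 [hw1 [_ [hvw1 H]]]]]|[w [_ H]]].
  - pose proof (downset_of_extension hs hbip hcrit hnoP5 v w1 w2 hv hvw1 H) as D2.
    destruct (downset_vertex_onto w1 hw1) as [p [hp Dp]].
    assert (hpw1 : adj p w1) by (apply (Dp p hp); intros z h; exact h).
    exists p. split; [exact hp|]. split; [apply (D2 p hp), (H p hp); now left|].
    split; [intros ->; exact (hvw1 hpw1)|].
    intros u hu hvu hup.
    destruct (proj1 (H u hu) (proj2 (D2 u hu) hvu)) as [e| ->]; [right|now left].
    exact (prime_twins_eq _ _ (proj1 hcrit) hup (proj1 (Dp u hu) e)).
  - exfalso. apply hu0v, H, hsym, hvu0, hsym, H. reflexivity.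
Qed.

End Predecessor.

Section Construction.

Context {V : Type} {adj : V -> V -> Prop} {X : V -> Prop}.
Hypothesis hs : simple_graph adj.
Hypothesis hbip : bipartition adj X.
Hypothesis hcrit : critical_graph adj.
Hypothesis h4 : at_least 4 V.
Hypothesis hnoP5 : ~ has_induced_P5 adj.

Let hsym := proj1 hs.

Local Notation XV := {x : V | X x}.
Local Notation YV := {y : V | ~ X y}.

Definition nbhd_order (i j : XV) : Prop := nsub adj (proj1_sig j) (proj1_sig i).

Lemma nbhd_order_linear : linear_order nbhd_order.
Proof.
  split; [intros i z h; exact h|]. split.
  { intros i j hij hji. apply sig_inj, (prime_twins_eq _ _ (proj1 hcrit) hji hij). }
  split; [intros i j k hij hjk z h; exact (hij z (hjk z h))|].
  intros i j.
  destruct (P5_free_prime_nested hs hbip hnoP5 (proj1 hcrit) _ _ (proj2_sig i) (proj2_sig j))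
    as [h|h]; [right|left]; exact h.
Qed.

Lemma rep_exists (i : XV) : exists w : YV, downset_vertex adj X (proj1_sig i) (proj1_sig w).
Proof.
  destruct (downset_vertex_exists hs hbip hcrit h4 hnoP5 _ (proj2_sig i)) as [w [hw D]].
  now exists (exist _ w hw).
Qed.

Definition rep (i : XV) : YV := proj1_sig (constructive_indefinite_description _ (rep_exists i)).

Lemma rep_spec i : downset_vertex adj X (proj1_sig i) (proj1_sig (rep i)).
Proof. exact (proj2_sig (constructive_indefinite_description _ (rep_exists i))). Qed.

Lemma rep_adj x x' : adj (proj1_sig x) (proj1_sig (rep x')) <-> nbhd_order x x'.
Proof. exact (rep_spec x' _ (proj2_sig x)). Qed.

Lemma rep_injective a b : rep a = rep b -> a = b.
Proof.
  intro E. apply (proj1 (proj2 nbhd_order_linear)); apply rep_adj.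
  - rewrite <- E. apply rep_adj, nbhd_order_linear.
  - rewrite E. apply rep_adj, nbhd_order_linear.
Qed.

Lemma rep_surjective (y : YV) : exists x, rep x = y.
Proof.
  destruct (downset_vertex_onto hs hbip hcrit h4 hnoP5 _ (proj2_sig y)) as [p [hp D]].
  exists (exist _ p hp). apply sig_inj.
  exact (downset_vertex_unique hs hbip hcrit _ _ _ (proj2_sig (rep _)) (proj2_sig y)
           (rep_spec (exist _ p hp)) D).
Qed.

Lemma nbhd_order_rep i j :
  nbhd_order i j <-> nsub adj (proj1_sig (rep i)) (proj1_sig (rep j)).
Proof.
  split.
  - intros l z hz.
    pose proof (bip_adj_in hbip _ _ (hsym _ _ hz) (proj2_sig (rep i))) as hXz.
    apply (rep_adj (exist _ z hXz)).
    exact (proj1 (proj2 (proj2 nbhd_order_linear)) _ _ _ (proj1 (rep_adj (exist _ z hXz) i) hz) l).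
  - intro h. apply rep_adj, h, rep_adj, nbhd_order_linear.
Qed.

Lemma nbhd_order_discrete : discrete_order nbhd_order.
Proof.
  split.
  - intros i [j [lji nji]].
    destruct (critical_predecessor hs hbip hcrit h4 hnoP5 _ (proj2_sig i))
      as [p [hp [hip [hpi hbet]]]].
    { exists (proj1_sig j). split; [exact (proj2_sig j)|]. split; [exact lji|].
      intro E. exact (nji (sig_inj E)). }
    exists (exist _ p hp). split; [split; [exact hip|]|].
    + intro E. apply hpi. exact (f_equal (@proj1_sig _ _) E).
    + intros z [[lpz npz] [lzi nzi]].
      destruct (hbet _ (proj2_sig z) lzi lpz) as [E|E].
      * exact (nzi (sig_inj E)).
      * apply npz, sig_inj. exact (eq_sym E).
  - (* The successor of [i] is the preimage of the predecessor of [rep i] on the other side. *)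
    intros i [j [lij nij]].
    destruct (critical_predecessor hs (bipartition_compl hbip) hcrit h4 hnoP5 _
                (proj2_sig (rep i))) as [p [hp [hip [hpi hbet]]]].
    { exists (proj1_sig (rep j)). split; [exact (proj2_sig (rep j))|].
      split; [exact (proj1 (nbhd_order_rep i j) lij)|].
      intro E. exact (nij (rep_injective _ _ (sig_inj (eq_sym E)))). }
    destruct (rep_surjective (exist _ p hp)) as [s Es].
    assert (hps : p = proj1_sig (rep s)) by (rewrite Es; reflexivity).
    subst p.
    exists s. split; [split|].
    + apply nbhd_order_rep, hip.
    + intros ->. exact (hpi eq_refl).
    + intros z [[liz niz] [lzs nzs]].
      apply nbhd_order_rep in liz, lzs.
      destruct (hbet _ (proj2_sig (rep z)) liz lzs) as [E|E].
      * exact (niz (eq_sym (rep_injective _ _ (sig_inj E)))).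
      * exact (nzs (rep_injective _ _ (sig_inj E))).
Qed.

Lemma critical_discrete_half_graph : discrete_half_graph adj X.
Proof.
  exists nbhd_order. split; [split|exact nbhd_order_discrete].
  - exact nbhd_order_linear.
  - exists rep. split; [split|exact rep_adj].
    + exact rep_injective.
    + exact rep_surjective.
Qed.

End Construction.

Theorem theorem1p21 (V : Type) (adj : V -> V -> Prop) (X : V -> Prop) :
  simple_graph adj ->
  bipartition adj X ->
  at_least 4 V ->
  (discrete_half_graph adj X <-> (~ has_induced_P5 adj /\ critical_graph adj)).
Proof.
  intros hs hbip h4. split.
  - intros [L [[hL [phi [hphi hadj]]] hdisc]]. split.
    + exact (nested_no_P5 (proj1 hs) hbip (half_nested L phi (proj1 hs) hbip hL hphi hadj)).
    + exact (half_graph_critical L phi (proj1 hs) hbip hL hphi hadj hdisc h4).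
  - intros [hnoP5 hcrit]. exact (critical_discrete_half_graph hs hbip hcrit h4 hnoP5).
Qed.
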